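(* Let $\mathcal S(a,b;r)=(S_{n,k}(a,b;r))_{n,k\ge0}$ (infinite lower-triangular matrix). (i) $\mathcal S(a,c;r_1+r_2)=\mathcal S(a,b;r_1)\,\mathcal S(b,c;r_2)$ for all complex $a,b,c,r_1,r_2$; moreover $\mathcal S(a,a;0)$ is the identity matrix, so $\mathcal S(a,b;r)^{-1}=\mathcal S(b,a;-r)$. (ii) For nonnegative integers $n,k,k_1,k_2$ with $k=k_1+k_2$, $$\frac{k!}{k_1!\,k_2!}S_{n,k}(a,b;r_1+r_2)=\sum\frac{n!}{n_1!\,n_2!}S_{n_1,k_1}(a,b;r_1)\,S_{n_2,k_2}(a,b;r_2),$$ summed over nonnegative $n_1,n_2$ with $n_1+n_2=n$, $n_1\ge k_1$, $n_2\ge k_2$. (iii) For nonnegative integers $k,n_1,n,k_2$ with $n_1=n+k_2$, $$\frac{n_1!}{n!\,k_2!}S_{n,k}(a,b;r_1+r_2)=\sum\frac{k_1!}{k!\,n_2!}S_{n_1,k_1}(a,b;r_1)\,S_{n_2,k_2}(b,a;r_2),$$ summed over nonnegative $k_1,n_2$ with $k_1=k+n_2$, $n_1\ge k_1$, $n_2\ge k_2$ (note $a,b$ interchanged in the second factor).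
   Context: Hsu–Shiue Stirling numbers $S_{n,k}(a,b;r)$: defined by $S_{0,0}=1$, $S_{n,k}=0$ if $n<0$, $k<0$ or $k>n$, and $S_{n+1,k+1}=[-an+b(k+1)+r]S_{n,k+1}+S_{n,k}$ for $n\ge0$, $k\in\mathbb Z$. *)

From HB Require Import structures.
From mathcomp Require Import all_boot all_order all_algebra.
From mathcomp Require Import reals.
From mathcomp Require Import complex.
Set Implicit Arguments. Unset Strict Implicit. Unset Printing Implicit Defensive.
Import Order.TTheory GRing.Theory Num.Theory.
Local Open Scope ring_scope.

(* Hsu--Shiue Stirling numbers S_{n,k}(a,b;r), for n,k >= 0 (entries with
   k < 0 vanish and are not represented):
   S_{0,0}=1, S_{0,k}=0 (k>0),
   S_{n+1,0}   = (-a n + r) S_{n,0}                 (the k = -1 case),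
   S_{n+1,k+1} = (-a n + b(k+1) + r) S_{n,k+1} + S_{n,k}. *)
Fixpoint hsS (F : pzRingType) (a b r : F) (n k : nat) {struct n} : F :=
  match n, k with
  | 0, 0 => 1
  | 0, _.+1 => 0
  | n'.+1, 0 => (- a * n'%:R + r) * hsS a b r n' 0
  | n'.+1, k'.+1 =>
      (- a * n'%:R + b * k'.+1%:R + r) * hsS a b r n' k'.+1 + hsS a b r n' k'
  end.

Definition ltmat (F : Type) := nat -> nat -> F.

Definition hsMat (F : pzRingType) (a b r : F) : ltmat F := fun n k => hsS a b r n k.

(* Product of lower-triangular infinite matrices: (AB)_{n,k} = sum_{j<=n} A_{n,j} B_{j,k}
   (A_{n,j} = 0 for j > n, so this is the full matrix product). *)
Definition ltmul (F : pzRingType) (A B : ltmat F) : ltmat F :=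
  fun n k => \sum_(0 <= j < n.+1) A n j * B j k.

Definition ltid (F : pzRingType) : ltmat F := fun n k => (n == k)%:R.

From HB Require Import structures.
From mathcomp Require Import all_boot all_order all_algebra.
From mathcomp Require Import reals complex ring.
From Stdlib Require Import FunctionalExtensionality.
Set Implicit Arguments. Unset Strict Implicit. Unset Printing Implicit Defensive.
Import Order.TTheory GRing.Theory Num.Theory.
Local Open Scope ring_scope.

(* All three identities follow from the recurrence alone, by showing that both
   sides satisfy the same recurrence with the same initial values.  In (i) the
   coefficient -a n + c k + r1 + r2 of S(a,c;r1+r2) splits as
   (-a n + b j + r1) + (-b j + c k + r2) along the intermediate column j.  In
   (ii) and (iii) the factorial quotients are binomial coefficients, and
   Pascal's rule turns the weighted convolutions into solutions of the
   recurrence of the left-hand side: in (ii) by induction on n, in (iii) by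
   induction on k2 and then n, where the coefficients -a (n + k2) + b (k + j) + r1
   of S(a,b;r1) and -b j + a k2 + r2 of S(b,a;r2) add up to -a n + b k + r1 + r2. *)

Section PrevCol.
Variable F : comPzRingType.
Implicit Types f g : nat -> F.

(* [prevcol f k] is [f (k - 1)], with the value 0 in column [k = 0]: it encodes
   the vanishing column S_{n,-1} of the recurrence. *)
Definition prevcol f (k : nat) : F := if k is k'.+1 then f k' else 0.

Lemma prevcol0 f : prevcol f 0 = 0. Proof. by []. Qed.

Lemma prevcolS f k : prevcol f k.+1 = f k. Proof. by []. Qed.

Lemma eq_prevcol f g k : (forall i, (i < k)%N -> f i = g i) -> prevcol f k = prevcol g k.
Proof. by case: k => //= k; apply. Qed.

Lemma prevcol_mull (c : F) f k : prevcol (fun i => c * f i) k = c * prevcol f k.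
Proof. by case: k => //=; rewrite mulr0. Qed.

Lemma binomial_prevcol f k1 k2 :
  'C(k1 + k2, k1)%:R * prevcol f (k1 + k2) =
  prevcol (fun i => 'C(i + k2, i)%:R * f (i + k2)%N) k1 +
  prevcol (fun j => 'C(k1 + j, k1)%:R * f (k1 + j)%N) k2.
Proof.
case: k1 k2 => [|k1] [|k2] /=; rewrite ?addn0 ?add0n ?bin0 ?binn ?mulr0 ?addr0 ?add0r //.
by rewrite !addSn addnS binS natrD mulrDl addrC.
Qed.

End PrevCol.

Section BinomialSums.
Variable F : comPzRingType.
Implicit Types f g : nat -> F.

Lemma sumr_nat_cut f m M : (m <= M)%N -> (forall j, (m <= j)%N -> f j = 0) ->
  \sum_(0 <= j < M) f j = \sum_(0 <= j < m) f j.
Proof.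
move=> mM f0; rewrite (big_cat_nat (leq0n m) mM) /= [X in _ + X]big_nat_cond.
by rewrite [X in _ + X]big1 ?addr0 // => j /andP[/andP[mj _] _]; apply: f0.
Qed.

Lemma sum_binomialS f g n :
  \sum_(0 <= i < n.+2) 'C(n.+1, i)%:R * f i * g (n.+1 - i)%N =
  \sum_(0 <= i < n.+1) 'C(n, i)%:R * (f i.+1 * g (n - i)%N + f i * g (n.+1 - i)%N).
Proof.
rewrite big_nat_recl // bin0 subn0.
under eq_bigr do rewrite subSS binS natrD !mulrDl.
under [RHS]eq_bigr do rewrite mulrDr !mulrA.
rewrite !big_split /= addrA [RHS]addrC; congr (_ + _).
rewrite [RHS]big_nat_recl // bin0 subn0 big_nat_recr //= bin_small // !mul0r addr0.
by congr (_ + _); apply: eq_bigr => i _; rewrite subSS.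
Qed.

End BinomialSums.

Section Recurrence.
Variable F : comPzRingType.
Implicit Types a b c r : F.

Lemma hsSE a b r n k : hsS a b r n.+1 k =
  (- a * n%:R + b * k%:R + r) * hsS a b r n k + prevcol (hsS a b r n) k.
Proof. by case: k => [|k] /=; rewrite ?mulr0 ?addr0. Qed.

Lemma hsS_small a b r n k : (n < k)%N -> hsS a b r n k = 0.
Proof.
elim: n k => [|n IH] [|k] //= ltnk.
by rewrite !IH ?mulr0 ?addr0 // ltnW.
Qed.

Lemma hsS_diag a b r n : hsS a b r n n = 1.
Proof. by elim: n => [|n IH] //=; rewrite hsS_small // mulr0 add0r. Qed.

Lemma hsS_comp a b c r1 r2 n k : hsS a c (r1 + r2) n k =
  \sum_(0 <= j < n.+1) hsS a b r1 n j * hsS b c r2 j k.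
Proof.
elim: n k => [|n IH] k.
  by rewrite big_nat1 /=; case: k => //=; rewrite mul1r.
rewrite hsSE; under eq_bigr do rewrite hsSE mulrDl.
rewrite big_split /= [X in _ = _ + X]big_nat_recl // mul0r add0r.
rewrite (sumr_nat_cut (m := n.+1)) => [||j nj]; last 2 first.
- exact: leqnSn.
- by rewrite hsS_small // mulr0 mul0r.
under [X in _ = _ + X]eq_bigr do rewrite hsSE.
rewrite -big_split /= (eq_bigr (fun j => (- a * n%:R + c * k%:R + (r1 + r2)) *
  (hsS a b r1 n j * hsS b c r2 j k) + hsS a b r1 n j * prevcol (hsS b c r2 j) k)) => [|j _];
  last by ring.
rewrite big_split /= -mulr_sumr -IH; congr (_ + _).
case: k => [|k] /=; last exact: IH.
by rewrite big1 // => i _; rewrite mulr0.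
Qed.

Lemma hsS_id a n k : hsS a a 0 n k = (n == k)%:R.
Proof.
elim: n k => [|n IH] k; first by case: k.
rewrite hsSE IH; case: k => [|k] /=.
  by case: (eqVneq n 0) => [->|_] /=; [ring | rewrite mulr0 addr0].
rewrite IH eqSS; case: (eqVneq n k.+1) => [->|_]; last by rewrite mulr0 add0r.
by rewrite addr0 mulNr addNr mul0r add0r.
Qed.

Lemma hsMat_mul a b c r1 r2 :
  hsMat a c (r1 + r2) = ltmul (hsMat a b r1) (hsMat b c r2).
Proof.
apply: functional_extensionality => n; apply: functional_extensionality => k.
exact: hsS_comp.
Qed.

Lemma hsMat_id a : hsMat a a 0 = @ltid F.
Proof.
apply: functional_extensionality => n; apply: functional_extensionality => k.
exact: hsS_id.
Qed.

Lemma hsMat_inv a b r :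
  ltmul (hsMat a b r) (hsMat b a (- r)) = @ltid F /\
  ltmul (hsMat b a (- r)) (hsMat a b r) = @ltid F.
Proof. by rewrite -!hsMat_mul subrr addNr !hsMat_id. Qed.

End Recurrence.

Section BinomialConvolution.
Variables (F : comPzRingType) (a b r1 r2 : F).
Notation A := (hsS a b r1).
Notation B := (hsS a b r2).
Notation T := (hsS a b (r1 + r2)).

Definition binconv n k1 k2 :=
  \sum_(0 <= i < n.+1) 'C(n, i)%:R * A i k1 * B (n - i)%N k2.

Lemma binconvS n k1 k2 : binconv n.+1 k1 k2 =
  (- a * n%:R + b * (k1 + k2)%:R + (r1 + r2)) * binconv n k1 k2
  + prevcol (binconv n ^~ k2) k1 + prevcol (binconv n k1) k2.
Proof.
rewrite /binconv (sum_binomialS (A ^~ k1) (B ^~ k2)) mulr_sumr.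
have -> : prevcol (fun k => \sum_(0 <= i < n.+1) 'C(n, i)%:R * A i k * B (n - i)%N k2) k1 =
    \sum_(0 <= i < n.+1) 'C(n, i)%:R * prevcol (A i) k1 * B (n - i)%N k2.
  by case: k1 => [|k1] //=; rewrite big1 // => i _; rewrite mulr0 mul0r.
have -> : prevcol (fun k => \sum_(0 <= i < n.+1) 'C(n, i)%:R * A i k1 * B (n - i)%N k) k2 =
    \sum_(0 <= i < n.+1) 'C(n, i)%:R * A i k1 * prevcol (B (n - i)%N) k2.
  by case: k2 => [|k2] //=; rewrite big1 // => i _; rewrite mulr0.
rewrite -!big_split; apply: eq_big_nat => i /andP[_ lein].
rewrite [RHS]/= subSn // !hsSE natrB // natrD; ring.
Qed.

Lemma binconvE n k1 k2 : binconv n k1 k2 = 'C(k1 + k2, k1)%:R * T n (k1 + k2).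
Proof.
elim: n k1 k2 => [|n IH] k1 k2.
  rewrite /binconv big_nat1 bin0 mul1r.
  by case: k1 k2 => [|k1] [|k2] /=; rewrite ?mulr0 ?mul0r ?mulr1 ?bin0.
rewrite binconvS (eq_prevcol (fun i _ => IH i k2)) (eq_prevcol (fun j _ => IH k1 j)).
by rewrite -addrA -(binomial_prevcol (T n)) IH hsSE; ring.
Qed.

End BinomialConvolution.

Section SwappedConvolution.
Variables (F : comPzRingType) (a b r1 r2 : F).
Notation A := (hsS a b r1).
Notation B := (hsS b a r2).
Notation T := (hsS a b (r1 + r2)).

(* Any bound [M > n + k2] gives the same sum; keeping [M] free lets the double
   induction work with a single range of summation. *)
Definition swapconv M n k k2 :=
  \sum_(0 <= j < M) 'C(k + j, k)%:R * A (n + k2)%N (k + j)%N * B j k2.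

Lemma swapconv_prevcolA M n k k2 : (n.+1 + k2 < M)%N ->
  \sum_(0 <= j < M) 'C(k + j, k)%:R * prevcol (A (n + k2)%N) (k + j) * B j k2 =
  prevcol (swapconv M n ^~ k2) k
  + \sum_(0 <= j < M) 'C(k + j, k)%:R * A (n + k2)%N (k + j)%N * B j.+1 k2.
Proof.
case: M => [//|M] ltM.
rewrite [X in _ = _ + X](sumr_nat_cut (m := M)) => [||j Mj]; last 2 first.
- exact: leqnSn.
- rewrite hsS_small ?mulr0 ?mul0r //.
  by rewrite addSn ltnS in ltM; rewrite (leq_trans ltM) // (leq_trans Mj) ?leq_addl.
case: k => [|k].
  rewrite prevcol0 add0r big_nat_recl // !add0n prevcol0 mulr0 mul0r add0r.
  by apply: eq_bigr => j _; rewrite !add0n prevcolS !bin0.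
under eq_bigr do rewrite addSn binS natrD !mulrDl prevcolS.
rewrite big_split [LHS]/= addrC prevcolS [X in _ + X = _]big_nat_recl // addn0.
rewrite bin_small // !mul0r add0r.
by congr (_ + _); apply: eq_bigr => j _; rewrite addnS addSn.
Qed.

Lemma swapconvS M n k k2 : (n.+1 + k2 < M)%N ->
  swapconv M n.+1 k k2 = (- a * n%:R + b * k%:R + (r1 + r2)) * swapconv M n k k2
     + prevcol (swapconv M n ^~ k2) k + prevcol (swapconv M n.+1 k) k2.
Proof.
move=> ltM; rewrite {1}/swapconv addSn.
under eq_bigr do rewrite hsSE mulrDr mulrDl.
rewrite big_split /= swapconv_prevcolA //.
under [X in _ + (_ + X)]eq_bigr do rewrite hsSE.
have -> : prevcol (swapconv M n.+1 k) k2 = \sum_(0 <= j < M)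
    'C(k + j, k)%:R * A (n + k2)%N (k + j)%N * prevcol (B j) k2.
  case: k2 {ltM} => [|k2] /=; first by rewrite big1 // => j _; rewrite mulr0.
  by rewrite /swapconv addnS addSn.
rewrite addrCA [RHS]addrAC [RHS]addrC; congr (_ + _).
rewrite /swapconv mulr_sumr -!big_split; apply: eq_bigr => j _ /=.
rewrite !natrD; ring.
Qed.

Lemma swapconv0 M k k2 : (k2 < M)%N -> swapconv M 0 k k2 = T 0 k.
Proof.
move=> ltM; rewrite /swapconv add0n (sumr_nat_cut (m := k2.+1)) => [||j k2j] //; last first.
  by rewrite hsS_small ?mulr0 ?mul0r // (leq_trans k2j) // leq_addl.
rewrite big_nat_recr //= big_nat_cond big1 ?add0r; last first.
  by move=> j /andP[/andP[_ jk2] _]; rewrite [B j k2]hsS_small // mulr0.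
case: k => [|k]; first by rewrite !add0n bin0 !hsS_diag !mulr1.
by rewrite hsS_small ?mulr0 ?mul0r // addSn ltnS leq_addl.
Qed.

Lemma swapconvE k2 n k M : (n + k2 < M)%N ->
  swapconv M n k k2 = 'C(n + k2, k2)%:R * T n k.
Proof.
elim/ltn_ind: k2 n k M => k2 IHk2 n; elim: n => [|n IHn] k M ltM.
  by rewrite swapconv0 // add0n binn mul1r.
have ltnM : (n + k2 < M)%N by apply: leq_trans ltM; rewrite addSn.
have ltlM l : (l < k2)%N -> (n.+1 + l < M)%N.
  by move=> lk2; apply: leq_trans ltM; rewrite ltnS leq_add2l ltnW.
rewrite swapconvS // IHn // (eq_prevcol (fun i _ => IHn i M ltnM)).
rewrite (eq_prevcol (fun l lk2 => IHk2 l lk2 n.+1 k M (ltlM l lk2))).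
rewrite prevcol_mull [T n.+1 k]hsSE.
case: k2 {IHk2 IHn ltM ltnM ltlM} => [|k2].
  by rewrite prevcol0 !addn0 !bin0 addr0; ring.
rewrite prevcolS [in RHS]addSn binS natrD (addSn n k2) -addnS; ring.
Qed.

End SwappedConvolution.

Lemma fact_ratio_bin (F : numFieldType) m n : (m <= n)%N ->
  (n`!)%:R / ((m`!)%:R * ((n - m)`!)%:R) = 'C(n, m)%:R :> F.
Proof.
move=> le_mn; rewrite -(bin_fact le_mn) !natrM mulfK //.
by rewrite mulf_neq0 // pnatr_eq0 -lt0n fact_gt0.
Qed.

Section FactorialForms.
Variables (F : numFieldType) (a b r1 r2 : F).

Lemma hsS_binomial_conv n k1 k2 :
  ((k1 + k2)`!)%:R / ((k1`!)%:R * (k2`!)%:R) * hsS a b (r1 + r2) n (k1 + k2) =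
  \sum_(n1 < n.+1 | (k1 <= n1)%N && (k2 <= n - n1)%N)
    (n`!)%:R / ((n1`!)%:R * ((n - n1)`!)%:R)
      * hsS a b r1 n1 k1 * hsS a b r2 (n - n1) k2.
Proof.
have := fact_ratio_bin F (leq_addr k2 k1); rewrite addKn => ->.
rewrite -binconvE /binconv big_mkord [RHS]big_mkcond /=; apply: eq_bigr => i _.
case: ifP => [_|/negbT]; first by rewrite fact_ratio_bin // -ltnS.
rewrite negb_and -!ltnNge => /orP[lt|lt].
  by rewrite [hsS a b r1 i k1]hsS_small // mulr0 mul0r.
by rewrite [hsS a b r2 _ k2]hsS_small // mulr0.
Qed.

Lemma hsS_swapped_conv k n k2 :
  ((n + k2)`!)%:R / ((n`!)%:R * (k2`!)%:R) * hsS a b (r1 + r2) n k =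
  \sum_(n2 < (n + k2).+1 | (k + n2 <= n + k2)%N && (k2 <= n2)%N)
    ((k + n2)`!)%:R / ((k`!)%:R * (n2`!)%:R)
      * hsS a b r1 (n + k2) (k + n2) * hsS b a r2 n2 k2.
Proof.
have -> : (n`!)%:R * (k2`!)%:R = (k2`!)%:R * ((n + k2 - k2)`!)%:R :> F.
  by rewrite addnK mulrC.
rewrite fact_ratio_bin ?leq_addl // -(swapconvE a b r1 r2 k (ltnSn (n + k2))).
rewrite /swapconv big_mkord [RHS]big_mkcond /=; apply: eq_bigr => j _.
case: ifP => [_|/negbT]; first by have := fact_ratio_bin F (leq_addr j k); rewrite addKn => ->.
rewrite negb_and -!ltnNge => /orP[lt|lt].
  by rewrite [hsS a b r1 _ (k + j)]hsS_small // mulr0 mul0r.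
by rewrite [hsS b a r2 j k2]hsS_small // mulr0.
Qed.

End FactorialForms.

Theorem mainTheorem13 (R : realType) :
  (* (i) *)
  (forall a b c r1 r2 : R[i],
      hsMat a c (r1 + r2) = ltmul (hsMat a b r1) (hsMat b c r2)) /\
  (forall a : R[i], hsMat a a 0 = @ltid R[i]) /\
  (forall a b r : R[i],
      ltmul (hsMat a b r) (hsMat b a (- r)) = @ltid R[i] /\
      ltmul (hsMat b a (- r)) (hsMat a b r) = @ltid R[i]) /\
  (* (ii) *)
  (forall (a b r1 r2 : R[i]) (n k k1 k2 : nat), k = (k1 + k2)%N ->
      (k`!)%:R / ((k1`!)%:R * (k2`!)%:R) * hsS a b (r1 + r2) n k =
      \sum_(n1 < n.+1 | (k1 <= n1)%N && (k2 <= n - n1)%N)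
        (n`!)%:R / ((n1`!)%:R * ((n - n1)`!)%:R)
          * hsS a b r1 n1 k1 * hsS a b r2 (n - n1) k2) /\
  (* (iii) *)
  (forall (a b r1 r2 : R[i]) (k n1 n k2 : nat), n1 = (n + k2)%N ->
      (n1`!)%:R / ((n`!)%:R * (k2`!)%:R) * hsS a b (r1 + r2) n k =
      \sum_(n2 < n1.+1 | (k + n2 <= n1)%N && (k2 <= n2)%N)
        ((k + n2)`!)%:R / ((k`!)%:R * (n2`!)%:R)
          * hsS a b r1 n1 (k + n2) * hsS b a r2 n2 k2).
Proof.
split; first exact: hsMat_mul.
split; first exact: hsMat_id.
split; first exact: hsMat_inv.
split=> a b r1 r2 > ->; [exact: hsS_binomial_conv | exact: hsS_swapped_conv].
Qed.
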